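(* Let $H$ and $X$ be Hilbert spaces with inner products $(\cdot,\cdot)$, let $X^*$ be the dual space of $X$, and let $\langle\cdot,\cdot\rangle$ denote the sesquilinear duality pairing of $X^*$ and $X$. Assume $F:H\to H$ is a linear compact normal operator satisfying $F=GM^*G^*$, where $G:X\to H$ and $M:X^*\to X$ are bounded linear operators and $G^*:H\to X^*$ is defined by $\langle G^*g,\varphi\rangle=(g,G\varphi)$ for all $\varphi\in X$, $g\in H$. Assume further that $G^*$ has a finite dimensional null space and that $M=M_0+C$ for some compact operator $C$ and some self-adjoint operator $M_0$ which is coercive on $G^*(H)$, i.e. there exists $c_0>0$ with $\langle\phi,M_0\phi\rangle\ge c_0\|\phi\|^2$ for all $\phi\in G^*(H)$. Then $F$ has at most a finite number of eigenvalues whose real parts are negative. *)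

From HB Require Import structures.
From mathcomp Require Import all_boot all_order all_algebra.
From mathcomp Require Import reals.
From mathcomp Require Export complex.
Set Implicit Arguments. Unset Strict Implicit. Unset Printing Implicit Defensive.
Import Order.TTheory GRing.Theory Num.Theory.
Local Open Scope ring_scope.
Local Open Scope complex_scope.

Section Defs.
Variable R : realType.
Local Notation C := R[i].

Definition converges_to (V : zmodType) (nV : V -> R) (u : nat -> V) (l : V) :=
  forall e : R, 0 < e -> exists N, forall k, (N <= k)%N -> nV (u k - l) < e.

Definition cauchy_seq (V : zmodType) (nV : V -> R) (u : nat -> V) :=
  forall e : R, 0 < e -> exists N, forall m n, (N <= m)%N -> (N <= n)%N ->
    nV (u m - u n) < e.

Definition bounded_op (V W : zmodType) (nV : V -> R) (nW : W -> R) (T : V -> W) :=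
  exists K : R, forall x, nW (T x) <= K * nV x.

(* compact operator: the image of every bounded sequence has a convergent
   subsequence (i.e. the image of the unit ball is relatively compact) *)
Definition compact_op (V W : zmodType) (nV : V -> R) (nW : W -> R) (T : V -> W) :=
  forall u : nat -> V, (exists B : R, forall n, nV (u n) <= B) ->
    exists (phi : nat -> nat) (l : W),
      (forall n, (phi n < phi n.+1)%N) /\
      converges_to nW (fun n => T (u (phi n))) l.

Definition ipnorm (V : Type) (ip : V -> V -> C) (x : V) : R :=
  Num.sqrt (complex.Re (ip x x)).

Definition is_hilbert (V : lmodType C) (ip : V -> V -> C) :=
  [/\ forall (a : C) x y z, ip (a *: x + y) z = a * ip x z + ip y z,
      forall x y, ip y x = (ip x y)^*,
      forall x, complex.Im (ip x x) = 0 /\ 0 <= complex.Re (ip x x),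
      forall x, ip x x = 0 -> x = 0
    & forall u : nat -> V, cauchy_seq (ipnorm ip) u ->
        exists l, converges_to (ipnorm ip) u l].

(* (Xs, pair, nXs) is (a copy of) the dual space X^* of the Hilbert space X:
   the pairing <f, phi> is linear in f and antilinear in phi, f |-> <f, .>
   is a bijection from Xs onto the bounded antilinear functionals on X,
   and nXs is the dual (operator) norm. *)
Definition is_dual (X : lmodType C) (ipX : X -> X -> C)
    (Xs : lmodType C) (pair : Xs -> X -> C) (nXs : Xs -> R) :=
  [/\ forall (a : C) f g phi, pair (a *: f + g) phi = a * pair f phi + pair g phi,
      forall (a : C) f phi psi,
        pair f (a *: phi + psi) = a^* * pair f phi + pair f psi,
      forall f, (forall phi, pair f phi = 0) -> f = 0,
      forall l : X -> C,
        (forall (a : C) phi psi, l (a *: phi + psi) = a^* * l phi + l psi) ->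
        (exists K : R, forall phi, Normc.normc (l phi) <= K * ipnorm ipX phi) ->
        exists f, forall phi, l phi = pair f phi
    & forall f,
        (forall phi, Normc.normc (pair f phi) <= nXs f * ipnorm ipX phi) /\
        (forall e : R, 0 < e -> exists phi,
            ipnorm ipX phi <= 1 /\ nXs f - e < Normc.normc (pair f phi))].

Definition hadjoint (V W : Type) (ipV : V -> V -> C) (ipW : W -> W -> C)
    (F : V -> W) (Fa : W -> V) :=
  forall x y, ipW (F x) y = ipV x (Fa y).

Definition normal_op (V : Type) (ip : V -> V -> C) (F : V -> V) :=
  exists Fa : V -> V, hadjoint ip ip F Fa /\ forall x, F (Fa x) = Fa (F x).

Definition dual_adjoint (X Xs : Type) (pair : Xs -> X -> C)
    (M Ms : Xs -> X) :=
  forall phi psi, pair phi (Ms psi) = (pair psi (M phi))^*.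

Definition op_eigenvalue (V : lmodType C) (F : V -> V) (lam : C) :=
  exists v : V, v <> 0 /\ F v = lam *: v.

Definition finite_dim_kernel (V W : lmodType C) (T : V -> W) :=
  exists (n : nat) (b : 'I_n -> V), forall v, T v = 0 ->
    exists c : 'I_n -> C, v = \sum_(i < n) c i *: b i.

End Defs.

From HB Require Import structures.
From mathcomp Require Import all_boot all_order all_algebra.
From mathcomp Require Import reals complex.
From mathcomp Require Import ring lra.
From Stdlib Require Import ClassicalEpsilon.
Set Implicit Arguments. Unset Strict Implicit. Unset Printing Implicit Defensive.
Import Order.TTheory GRing.Theory Num.Theory.
Local Open Scope ring_scope.
Local Open Scope complex_scope.

(* If F had infinitely many eigenvalues with negative real part, then for any
   finitely many y_1, ..., y_n in X one could take eigenvectors of F for n + 1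
   distinct such eigenvalues; they are orthogonal because F is normal, and a
   nonzero combination psi of them makes C G^* psi orthogonal to every y_k.
   Then Re (F psi, psi) < 0, while (F psi, psi) = <phi, M phi> for
   phi = G^* psi, so the coercivity of M_0 gives c_0 |phi|^2 < |phi| |C phi|:
   the unit vector u = phi / |phi| has |C u| > c_0.  Iterating yields a bounded
   sequence u_n whose images C u_n are pairwise orthogonal of norm > c_0, so no
   subsequence of C u_n converges, contradicting the compactness of C. *)

Local Notation Re := complex.Re.
Local Notation Im := complex.Im.

Section ComplexParts.
Variable R : realType.
Implicit Types (a x y z : R[i]) (r : R).

Lemma ReD x y : Re (x + y) = Re x + Re y. Proof. by case: x; case: y. Qed.

Lemma ReB x y : Re (x - y) = Re x - Re y. Proof. by case: x; case: y. Qed.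

Lemma ReJ x : Re x^* = Re x. Proof. by case: x. Qed.

Lemma Re_sum (I : Type) (s : seq I) (P : pred I) (f : I -> R[i]) :
  Re (\sum_(i <- s | P i) f i) = \sum_(i <- s | P i) Re (f i).
Proof. exact: (big_morph _ ReD). Qed.

Lemma Re_mulr_real x r : Re (x * r%:C) = Re x * r.
Proof. by case: x => x1 x2 /=; ring. Qed.

Lemma Re_mul_conj a z : Re (a * z * a^*) = (Re a ^+ 2 + Im a ^+ 2) * Re z.
Proof. by case: a => a1 a2; case: z => z1 z2 /=; ring. Qed.

Lemma sqr_Re_Im_gt0 a : a != 0 -> 0 < Re a ^+ 2 + Im a ^+ 2.
Proof.
case: a => a1 a2 a_neq0 /=; rewrite lt0r addr_ge0 ?sqr_ge0 // andbT.
by rewrite paddr_eq0 ?sqr_ge0 // !sqrf_eq0; apply: contra a_neq0 => /andP[/eqP-> /eqP->].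
Qed.

Lemma Re_ge_Nnormc x : - Normc.normc x <= Re x.
Proof.
case: x => x1 x2 /=; apply: lerNnormlW.
by rewrite -sqrtr_sqr ler_wsqrtr // lerDl sqr_ge0.
Qed.

End ComplexParts.

Section InnerProduct.
Variables (R : realType) (V : lmodType R[i]) (ip : V -> V -> R[i]).
Hypothesis hV : is_hilbert ip.
Local Notation nm := (ipnorm ip).

Lemma ip_conj x y : ip y x = (ip x y)^*. Proof. by case: hV. Qed.

Lemma ipDl x y z : ip (x + y) z = ip x z + ip y z.
Proof. by case: hV => lin _ _ _ _; rewrite -{1}[x]scale1r lin mul1r. Qed.

Lemma ip0l z : ip 0 z = 0.
Proof. by have := ipDl 0 0 z; rewrite addr0 -{1}[ip 0 z]addr0 => /addrI <-. Qed.

Lemma ipZl a x z : ip (a *: x) z = a * ip x z.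
Proof. by case: hV => lin _ _ _ _; rewrite -[a *: x]addr0 lin ip0l addr0. Qed.

Lemma ipNl x z : ip (- x) z = - ip x z.
Proof. by rewrite -scaleN1r ipZl mulN1r. Qed.

Lemma ipBl x y z : ip (x - y) z = ip x z - ip y z.
Proof. by rewrite ipDl ipNl. Qed.

Lemma ipDr x y z : ip z (x + y) = ip z x + ip z y.
Proof. by rewrite [LHS]ip_conj ipDl rmorphD (ip_conj x z) (ip_conj y z). Qed.

Lemma ipZr a x z : ip z (a *: x) = a^* * ip z x.
Proof. by rewrite [LHS]ip_conj ipZl rmorphM (ip_conj x z). Qed.

Lemma ip0r z : ip z 0 = 0.
Proof. by rewrite ip_conj ip0l conjc0. Qed.

Lemma ipBr x y z : ip z (x - y) = ip z x - ip z y.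
Proof. by rewrite [LHS]ip_conj ipBl rmorphB (ip_conj x z) (ip_conj y z). Qed.

Lemma ip_suml (I : Type) (s : seq I) (P : pred I) (f : I -> V) z :
  ip (\sum_(i <- s | P i) f i) z = \sum_(i <- s | P i) ip (f i) z.
Proof. exact: (big_morph (ip^~ z) (fun x y => ipDl x y z) (ip0l z)). Qed.

Lemma ip_sumr (I : Type) (s : seq I) (P : pred I) (f : I -> V) z :
  ip z (\sum_(i <- s | P i) f i) = \sum_(i <- s | P i) ip z (f i).
Proof. exact: (big_morph (ip z) (fun x y => ipDr x y z) (ip0r z)). Qed.

Lemma ip_self_real x : ip x x = (Re (ip x x))%:C.
Proof. by case: hV => _ _ /(_ x)[+ _]; case: (ip x x) => ? ? /= ->. Qed.

Lemma ip_self_gt0 x : x <> 0 -> 0 < Re (ip x x).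
Proof.
case: hV => _ _ /(_ x)[_ ge0] def _ x_neq0; rewrite lt0r ge0 andbT.
by apply/eqP => re0; apply/x_neq0/def; rewrite ip_self_real re0.
Qed.

Lemma sqr_ipnorm x : nm x ^+ 2 = Re (ip x x).
Proof. by case: hV => _ _ /(_ x)[_ ge0] _ _; rewrite sqr_sqrtr. Qed.

Lemma ipnorm_ge0 x : 0 <= nm x. Proof. exact: sqrtr_ge0. Qed.

Lemma ipnormZ (r : R) x : 0 <= r -> nm (r%:C *: x) = r * nm x.
Proof.
move=> r_ge0; rewrite /ipnorm ipZl ipZr mulrCA mulrC Re_mul_conj /=.
by rewrite expr0n addr0 sqrtrM ?sqr_ge0 // sqrtr_sqr ger0_norm.
Qed.

Lemma sqr_ipnorm_sub_orthogonal x y :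
  ip x y = 0 -> nm (x - y) ^+ 2 = nm x ^+ 2 + nm y ^+ 2.
Proof.
move=> xy0; rewrite !sqr_ipnorm ipBl !ipBr (ip_conj x y) xy0 conjc0.
by rewrite !ReB subr0 /=; lra.
Qed.

Lemma sqr_ipnorm_sub_le x y : nm (x - y) ^+ 2 <= 2 * nm x ^+ 2 + 2 * nm y ^+ 2.
Proof.
have sum_ge0 := sqr_ge0 (nm (x + y)).
rewrite !sqr_ipnorm ipBl !ipBr ipDl !ipDr !ReB !ReD in sum_ge0 *.
rewrite (ip_conj x y) ReJ in sum_ge0 *; lra.
Qed.

Lemma ip_sum_orthogonal m (w : 'I_m -> V) (b a : 'I_m -> R[i]) :
  (forall j k, j != k -> ip (w j) (w k) = 0) ->
  ip (\sum_j b j *: w j) (\sum_k a k *: w k) = \sum_j b j * ip (w j) (w j) * (a j)^*.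
Proof.
move=> w_orth; rewrite ip_suml; apply: eq_bigr => j _.
rewrite ipZl ip_sumr (bigD1 j) //= big1 => [|k kj]; last first.
  by rewrite ipZr w_orth ?mulr0 // eq_sym.
by rewrite addr0 ipZr mulrCA mulrC.
Qed.

Lemma Re_ip_eigen_combination_lt0 m (T : {linear V -> V}) (lam : 'I_m -> R[i])
    (w : 'I_m -> V) (a : 'I_m -> R[i]) j0 :
  (forall j, w j <> 0 /\ T (w j) = lam j *: w j) -> (forall j, Re (lam j) < 0) ->
  (forall j k, j != k -> ip (w j) (w k) = 0) -> a j0 != 0 ->
  Re (ip (T (\sum_j a j *: w j)) (\sum_j a j *: w j)) < 0.
Proof.
move=> w_eig lam_lt0 w_orth aj0_neq0.
have T_sum : T (\sum_j a j *: w j) = \sum_j (a j * lam j) *: w j.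
  by rewrite linear_sum; apply: eq_bigr => j _; rewrite linearZ_LR (w_eig j).2 scalerA.
have term j : Re (a j * lam j * ip (w j) (w j) * (a j)^*) =
    (Re (a j) ^+ 2 + Im (a j) ^+ 2) * (Re (lam j) * Re (ip (w j) (w j))).
  by rewrite -(mulrA (a j)) Re_mul_conj {1}ip_self_real Re_mulr_real.
have lam_w_lt0 j : Re (lam j) * Re (ip (w j) (w j)) < 0.
  by rewrite pmulr_llt0 ?lam_lt0 //; apply: ip_self_gt0; case: (w_eig j).
rewrite T_sum ip_sum_orthogonal // Re_sum (bigD1 j0) //= term.
have j0_lt0 :
    (Re (a j0) ^+ 2 + Im (a j0) ^+ 2) * (Re (lam j0) * Re (ip (w j0) (w j0))) < 0.
  by rewrite pmulr_rlt0 ?lam_w_lt0 ?sqr_Re_Im_gt0.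
suff : \sum_(j | j != j0) Re (a j * lam j * ip (w j) (w j) * (a j)^*) <= 0 by lra.
apply: sumr_le0 => j _; rewrite term mulr_ge0_le0 ?addr_ge0 ?sqr_ge0 //.
exact: ltW.
Qed.

Lemma exists_orthogonal_combination m (w : 'I_m -> V) (ys : seq V) :
  (size ys < m)%N ->
  exists a : 'I_m -> R[i], (exists j, a j != 0) /\
    forall y, y \in ys -> ip (\sum_j a j *: w j) y = 0.
Proof.
move=> ys_small.
pose A : 'M[R[i]]_(m, size ys) := \matrix_(j, k) ip (w j) (nth 0 ys k).
have : kermx A != 0.
  rewrite -mxrank_eq0 mxrank_ker subn_eq0 -ltnNge.
  exact: leq_ltn_trans (rank_leq_col A) ys_small.
case/rowV0Pn => a /sub_kermxP aA a_neq0.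
exists (a 0); split.
  apply/existsP; apply: contraNT a_neq0 => /existsPn a0.
  by apply/eqP/rowP => j; rewrite mxE; apply/eqP/negbNE/a0.
move=> y y_in; have k_lt : (index y ys < size ys)%N by rewrite index_mem.
have := congr1 (fun B : 'M_(1, size ys) => B 0 (Ordinal k_lt)) aA.
rewrite !mxE => <-.
rewrite ip_suml; apply: eq_bigr => j _.
by rewrite ipZl mxE nth_index.
Qed.

(* Normality makes the adjoint act on an eigenvector of eigenvalue mu as mu^*. *)
Lemma normal_eigvec_orthogonal (F : V -> V) v w lam mu :
  normal_op ip F -> F v = lam *: v -> F w = mu *: w -> lam != mu -> ip v w = 0.
Proof.
case=> Fa [F_adj F_normal] Fv Fw lam_neq_mu.
have Fa_adj x y : ip (Fa x) y = ip x (F y) by rewrite ip_conj -F_adj -ip_conj.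
have Fa_w : Fa w = mu^* *: w.
  apply/eqP; rewrite -subr_eq0; apply/eqP.
  case: hV => _ _ _ def _; apply: def.
  rewrite ipBl !ipBr !ipZl !ipZr -F_adj F_normal Fa_adj Fa_adj -F_adj Fw.
  by rewrite !ipZl !ipZr conjCK; ring.
have : lam * ip v w = mu * ip v w.
  by rewrite -ipZl -Fv F_adj Fa_w ipZr conjCK.
by move/eqP; rewrite -subr_eq0 -mulrBl mulf_eq0 subr_eq0 (negPf lam_neq_mu) => /eqP.
Qed.

(* By Pythagoras, x and y are more than c * sqrt 2 apart. *)
Lemma orthogonal_not_near (c : R) x y l : ip x y = 0 ->
  c < nm x -> c < nm y -> nm (x - l) < c / 2 -> nm (y - l) < c / 2 -> False.
Proof.
move=> xy0 cx cy xl yl.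
have c_gt0 : 0 < c by have := ipnorm_ge0 (x - l); lra.
have sqr_lt (u v : R) : 0 <= u -> u < v -> u ^+ 2 < v ^+ 2.
  by move=> u_ge0 uv; rewrite ltrXn2r.
have := sqr_lt _ _ (ltW c_gt0) cx; have := sqr_lt _ _ (ltW c_gt0) cy.
have := sqr_lt _ _ (ipnorm_ge0 _) xl; have := sqr_lt _ _ (ipnorm_ge0 _) yl.
have := sqr_ipnorm_sub_le (x - l) (y - l).
rewrite opprB addrA subrK (sqr_ipnorm_sub_orthogonal xy0).
have -> : (c / 2) ^+ 2 = c ^+ 2 / 4 by field.
have := sqr_ge0 c; lra.
Qed.

Lemma compact_op_orthogonal_image_small (U : zmodType) (nU : U -> R)
    (T : U -> V) (u : nat -> U) (B c : R) :
  compact_op nU nm T -> 0 < c -> (forall n, nU (u n) <= B) ->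
  (forall m n, (m < n)%N -> ip (T (u n)) (T (u m)) = 0) ->
  ~ (forall n, c < nm (T (u n))).
Proof.
move=> T_compact c_gt0 u_bd u_orth u_big.
have [phi [l [phi_incr phi_cvg]]] := T_compact u (ex_intro _ B u_bd).
have [N near_l] := phi_cvg (c / 2) (divr_gt0 c_gt0 (ltr0n _ 2)).
exact: (orthogonal_not_near (u_orth _ _ (phi_incr N)) (u_big _) (u_big _)
  (near_l _ (leqnSn N)) (near_l _ (leqnn N))).
Qed.

End InnerProduct.

Section DualSpace.
Variables (R : realType) (X Xs : lmodType R[i]) (ipX : X -> X -> R[i]).
Variables (pair : Xs -> X -> R[i]) (nXs : Xs -> R).
Hypothesis hXs : is_dual ipX pair nXs.

Lemma pairDr f phi psi : pair f (phi + psi) = pair f phi + pair f psi.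
Proof. by case: hXs => _ lin _ _ _; rewrite -{1}[phi]scale1r lin conjC1 mul1r. Qed.

Lemma pair0l phi : pair 0 phi = 0.
Proof.
case: hXs => lin _ _ _ _; have := lin 1 0 0 phi.
by rewrite scale1r addr0 mul1r -{1}[pair 0 phi]addr0 => /addrI <-.
Qed.

Lemma pairZl a f phi : pair (a *: f) phi = a * pair f phi.
Proof. by case: hXs => lin _ _ _ _; rewrite -[a *: f]addr0 lin pair0l addr0. Qed.

Lemma pair_bound f phi : Normc.normc (pair f phi) <= nXs f * ipnorm ipX phi.
Proof. by case: hXs => _ _ _ _ /(_ f)[]. Qed.

Lemma dual_norm_scale_le (r : R) f :
  0 < r -> 0 <= nXs f -> nXs (r%:C *: f) <= r * nXs f.
Proof.
move=> r_gt0 f_ge0; apply/ler_addgt0Pr => e e_gt0.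
case: hXs => _ _ _ _ /(_ (r%:C *: f))[_ /(_ e e_gt0)[phi [phi_le1 near_sup]]].
rewrite -lerBlDr (le_trans (ltW near_sup)) // pairZl Normc.normcM.
rewrite [Normc.normc _]/= expr0n addr0 sqrtr_sqr ger0_norm ?(ltW r_gt0) //.
rewrite ler_wpM2l ?(ltW r_gt0) // (le_trans (pair_bound f phi)) //.
by rewrite ler_piMr.
Qed.

End DualSpace.

Lemma exists_uniq_seq (T : eqType) (P : T -> Prop) :
  (forall s : seq T, exists2 x, P x & x \notin s) ->
  forall n, exists s : seq T, [/\ uniq s, size s = n & forall x, x \in s -> P x].
Proof.
move=> fresh; elim=> [|n [s [s_uniq s_size s_P]]]; first by exists [::].
have [x Px x_notin] := fresh s.
exists (x :: s); split; rewrite /= ?x_notin ?s_size //.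
by move=> y; rewrite inE => /orP[/eqP-> | /s_P].
Qed.

Lemma greedy_sequence (U : Type) (W : eqType) (P : U -> Prop) (f : U -> W)
    (r : W -> W -> Prop) :
  (forall ws : seq W, exists u, P u /\ forall w, w \in ws -> r (f u) w) ->
  exists u : nat -> U, (forall n, P (u n)) /\
    forall m n, (m < n)%N -> r (f (u n)) (f (u m)).
Proof.
move=> avoid; have [next next_spec] := choice _ avoid.
pose fix prefix n := if n is n'.+1 then f (next (prefix n')) :: prefix n' else [::].
have in_prefix m n : (m < n)%N -> f (next (prefix m)) \in prefix n.
  elim: n => // n IH; rewrite ltnS leq_eqVlt => /orP[/eqP-> | /IH m_in].
    by rewrite inE eqxx.
  by rewrite inE m_in orbT.
exists (fun n => next (prefix n)); split=> [n | m n mn]; first exact: (next_spec _).1.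
exact: (next_spec _).2 (in_prefix _ _ mn).
Qed.

Section EigenvaluesWithNegativeRealPart.
Variables (R : realType) (H X Xs : lmodType R[i]).
Variables (ipH : H -> H -> R[i]) (ipX : X -> X -> R[i]).
Variables (pair : Xs -> X -> R[i]) (nXs : Xs -> R).
Hypotheses (hH : is_hilbert ipH) (hX : is_hilbert ipX) (hXs : is_dual ipX pair nXs).
Variables (F : {linear H -> H}) (G : {linear X -> H}) (M : {linear Xs -> X}).
Variables (Gs : {linear H -> Xs}) (Ms : {linear Xs -> X}) (M0 Cc : {linear Xs -> X}).
Hypothesis F_normal : normal_op ipH F.
Hypothesis Gs_adj : forall g phi, pair (Gs g) phi = ipH g (G phi).
Hypothesis Ms_adj : dual_adjoint pair M Ms.
Hypothesis F_factor : forall g, F g = G (Ms (Gs g)).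
Hypothesis M_split : forall phi, M phi = M0 phi + Cc phi.
Variable c0 : R.
Hypothesis c0_gt0 : 0 < c0.
Hypothesis M0_coercive :
  forall g, c0 * nXs (Gs g) ^+ 2 <= Re (pair (Gs g) (M0 (Gs g))).

Lemma pair_GsM g : pair (Gs g) (M (Gs g)) = ipH (F g) g.
Proof. by rewrite F_factor (ip_conj hH) -Gs_adj Ms_adj; exact/esym/conjcK. Qed.

Lemma exists_Gs_negative_orthogonal (s : seq R[i]) (ys : seq X) :
  uniq s -> (size ys < size s)%N ->
  (forall lam, lam \in s -> op_eigenvalue F lam /\ Re lam < 0) ->
  exists g, Re (pair (Gs g) (M (Gs g))) < 0 /\
    forall y, y \in ys -> ipX (Cc (Gs g)) y = 0.
Proof.
move=> s_uniq ys_small s_eig.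
have s_eig_nth (j : 'I_(size s)) := s_eig _ (mem_nth 0 (ltn_ord j)).
have eigvec (j : 'I_(size s)) : exists v, v <> 0 /\ F v = s`_j *: v.
  by case: (s_eig_nth j).1 => v; exists v.
have [w w_eig] := fin_all_exists eigvec.
have w_orth j k : j != k -> ipH (w j) (w k) = 0.
  move=> jk; apply: (normal_eigvec_orthogonal hH F_normal (w_eig j).2 (w_eig k).2).
  by rewrite nth_uniq.
have [a [[j0 aj0_neq0] a_orth]] :=
  exists_orthogonal_combination hX (fun j => Cc (Gs (w j))) ys_small.
exists (\sum_j a j *: w j); split.
  rewrite pair_GsM; apply: (Re_ip_eigen_combination_lt0 hH w_eig _ w_orth aj0_neq0).
  by move=> j; case: (s_eig_nth j).
have -> : Cc (Gs (\sum_j a j *: w j)) = \sum_j a j *: Cc (Gs (w j)).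
  by rewrite !linear_sum; apply: eq_bigr => j _; rewrite !linearZ_LR.
exact: a_orth.
Qed.

Lemma exists_normalized_Cc_large (g : H) (ys : seq X) :
  Re (pair (Gs g) (M (Gs g))) < 0 ->
  (forall y, y \in ys -> ipX (Cc (Gs g)) y = 0) ->
  exists u, (nXs u <= 1 /\ c0 < ipnorm ipX (Cc u)) /\
    forall y, y \in ys -> ipX (Cc u) y = 0.
Proof.
move=> neg g_orth.
set phi := Gs g; set t := nXs phi; set N := ipnorm ipX (Cc phi).
have lower : c0 * t ^+ 2 - t * N <= Re (pair phi (M phi)).
  rewrite M_split (pairDr hXs) ReD; apply: lerD; first exact: M0_coercive.
  by rewrite (le_trans _ (Re_ge_Nnormc _)) // lerN2 (pair_bound hXs).
have N_ge0 : 0 <= N := ipnorm_ge0 ipX _.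
have t_gt0 : 0 < t.
  rewrite ltNge; apply/negP => t_le0.
  have : 0 <= c0 * t ^+ 2 by rewrite mulr_ge0 ?sqr_ge0 ?ltW.
  have : t * N <= 0 by rewrite mulr_le0_ge0.
  lra.
have c0t_lt : c0 * t < N by nra.
exists (t^-1%:C *: phi); split; first split.
- rewrite (le_trans (dual_norm_scale_le hXs _ _)) ?invr_gt0 ?(ltW t_gt0) //.
  by rewrite mulVf ?gt_eqF.
- by rewrite linearZ_LR (ipnormZ hX) ?invr_ge0 ?(ltW t_gt0) // ltr_pdivlMl // mulrC.
- by move=> y /g_orth y_orth; rewrite linearZ_LR (ipZl hX) y_orth mulr0.
Qed.

End EigenvaluesWithNegativeRealPart.

Theorem theorem3p6 (R : realType)
  (H X Xs : lmodType R[i])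
  (ipH : H -> H -> R[i]) (ipX : X -> X -> R[i])
  (pair : Xs -> X -> R[i]) (nXs : Xs -> R)
  (hH : is_hilbert ipH) (hX : is_hilbert ipX)
  (hXs : is_dual ipX pair nXs)
  (F : {linear H -> H}) (G : {linear X -> H}) (M : {linear Xs -> X})
  (Gs : {linear H -> Xs}) (Ms : {linear Xs -> X})
  (M0 Cc : {linear Xs -> X})
  (hFc : compact_op (ipnorm ipH) (ipnorm ipH) F)
  (hFn : normal_op ipH F)
  (hGb : bounded_op (ipnorm ipX) (ipnorm ipH) G)
  (hMb : bounded_op nXs (ipnorm ipX) M)
  (hGs : forall g phi, pair (Gs g) phi = ipH g (G phi))
  (hMs : dual_adjoint pair M Ms)
  (hF : forall g, F g = G (Ms (Gs g)))
  (hker : finite_dim_kernel Gs)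
  (hM : forall phi, M phi = M0 phi + Cc phi)
  (hC : compact_op nXs (ipnorm ipX) Cc)
  (hM0 : dual_adjoint pair M0 M0)
  (hcoer : exists c0 : R, 0 < c0 /\ forall g,
      complex.Im (pair (Gs g) (M0 (Gs g))) = 0 /\
      c0 * nXs (Gs g) ^+ 2 <= complex.Re (pair (Gs g) (M0 (Gs g)))) :
  exists s : seq R[i], forall lam, op_eigenvalue F lam -> complex.Re lam < 0 -> lam \in s.
Proof.
have [c0 [c0_gt0 M0_coercive]] := hcoer.
apply: NNPP => no_cover.
have fresh : forall s : seq R[i],
    exists2 lam, op_eigenvalue F lam /\ Re lam < 0 & lam \notin s.
  move=> s; apply: NNPP => none; apply: no_cover; exists s => lam lam_eig lam_neg.
  by apply: NNPP => /negP lam_notin; apply: none; exists lam.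
have avoid (ys : seq X) : exists u, (nXs u <= 1 /\ c0 < ipnorm ipX (Cc u)) /\
    forall y, y \in ys -> ipX (Cc u) y = 0.
  have [s [s_uniq s_size s_eig]] := exists_uniq_seq fresh (size ys).+1.
  have ys_small : (size ys < size s)%N by rewrite s_size.
  have [g [g_neg g_orth]] :=
    exists_Gs_negative_orthogonal hH hX Cc hFn hGs hMs hF s_uniq ys_small s_eig.
  have M0_coercive_Re g := (M0_coercive g).2.
  exact: (exists_normalized_Cc_large hX hXs hM c0_gt0 M0_coercive_Re g_neg g_orth).
have [u [u_spec u_orth]] := greedy_sequence (f := Cc) (r := fun x y => ipX x y = 0) avoid.
apply: (compact_op_orthogonal_image_small hX hC c0_gt0 _ u_orth) => [n|n].
- exact: (u_spec n).1.
- exact: (u_spec n).2.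
Qed.
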